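(* Let $\mathcal{G}$ be a finite weighted coloured--edge graph with $n\ge2$ vertices and $k$ colours such that for every ordered pair of vertices $(x,y)$ and every colour $c$ there is at most one edge from $x$ to $y$ of colour $c$. Then for any vertices $u\ne v$, the number of minimal paths from $u$ to $v$ (counting all of them, including distinct paths with equal weight vectors) is at most $k(k+1)^{n-2}$.
   Context: A weighted coloured--edge graph $\mathcal{G}=\langle V,E,\omega,\lambda\rangle$ consists of a directed multigraph with vertex set $V$ and edge set $E$ (each edge $e$ has an initial vertex and a distinct terminal vertex), a weight function $\omega:E\to\mathbb{R}^+$ (strictly positive reals), and a surjective colour function $\lambda:E\to M$ onto a set $M$ of colours; $k=|M|$. A path from $u$ to $v$ is a sequence of edges $e_1,\dots,e_l$ ($l\ge1$) such that the initial vertex of $e_1$ is $u$, the terminal vertex of $e_l$ is $v$, the terminal vertex of $e_i$ is the initial vertex of $e_{i+1}$, and no vertex is visited twice. For a path $p$ and colour $c$, $\omega_c(p)$ is the sum of $\omega(e)$ over edges $e$ of $p$ with $\lambda(e)=c$. For paths $p,q$ from $u$ to $v$, $p\le q$ means $\omega_c(p)\le\omega_c(q)$ for all $c\in M$. A path $p$ from $u$ to $v$ is minimal if there is no path $q$ from $u$ to $v$ with $q\le p$ and $\omega_c(q)<\omega_c(p)$ for some colour $c$. *)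

From HB Require Import structures.
From mathcomp Require Import all_boot all_order all_algebra.
Set Implicit Arguments. Unset Strict Implicit. Unset Printing Implicit Defensive.
Import Order.TTheory GRing.Theory Num.Theory.
Local Open Scope ring_scope.

(* A weighted coloured-edge graph is given by: a finite vertex type V, a finite
   edge type E, a finite colour type M, initial / terminal vertex maps
   src / dst : E -> V, a colour map col : E -> M and a weight map w : E -> R
   into an ordered field R (the reals in the paper). *)

Definition path_vertices (V E : Type) (src dst : E -> V) (p : seq E) : seq V :=
  match p with
  | [::] => [::]
  | e :: _ => src e :: map dst p
  end.

Definition is_cpath (V : eqType) (E : Type) (src dst : E -> V)
    (u v : V) (p : seq E) : bool :=
  match p with
  | [::] => false
  | e :: p' =>
      [&& src e == u,
          dst (last e p') == v,
          path (fun e1 e2 => dst e1 == src e2) e p'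
        & uniq (path_vertices src dst p)]
  end.

Definition cweight (R : numDomainType) (E : Type) (M : eqType)
    (col : E -> M) (w : E -> R) (c : M) (p : seq E) : R :=
  \sum_(e <- p | col e == c) w e.

Definition cle (R : numDomainType) (E : Type) (M : finType)
    (col : E -> M) (w : E -> R) (p q : seq E) : Prop :=
  forall c : M, cweight col w c p <= cweight col w c q.

Definition is_minimal_path (R : numDomainType) (V : eqType) (E : Type)
    (M : finType) (src dst : E -> V) (col : E -> M) (w : E -> R)
    (u v : V) (p : seq E) : Prop :=
  is_cpath src dst u v p /\
  ~ (exists q : seq E,
        is_cpath src dst u v q /\ cle col w q p /\
        exists c : M, cweight col w c q < cweight col w c p).

From HB Require Import structures.
From mathcomp Require Import all_boot all_order all_algebra.
From mathcomp Require Import lra.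
Set Implicit Arguments. Unset Strict Implicit. Unset Printing Implicit Defensive.
Import Order.TTheory GRing.Theory Num.Theory.
Local Open Scope ring_scope.

(* To a path p from u to v attach its "incoming colour"
   signature: for every vertex x <> u, the colour of the (unique) edge of p
   entering x, or None if p avoids x.  At v this is always some colour, so
   there are at most k (k+1)^(n-2) signatures.  The heart of the proof is
   that two minimal paths with the same signature are equal.  Compare them
   from the end: their last edges enter the same vertex with the same
   colour; if they coincide, strip them and continue.  If they differ they
   leave from different vertices, and since the signatures agree the start
   of each last edge is visited by the other path; splicing gives a
   shortcut of each path that replaces a nonempty detour plus its last edge
   by the other last edge.  Minimality then forces each last edge to be
   strictly lighter than the other, a contradiction. *)

Section Walks.
Variables (V : eqType) (E : Type) (src dst : E -> V).

Fixpoint walk (x : V) (p : seq E) : bool :=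
  if p is e :: p' then (src e == x) && walk (dst e) p' else true.

Definition endv (x : V) (p : seq E) : V := last x (map dst p).

Lemma walk_cat x p1 p2 :
  walk x (p1 ++ p2) = walk x p1 && walk (endv x p1) p2.
Proof. by elim: p1 x => [|e p1 IH] x //=; rewrite IH andbA. Qed.

Lemma endv_cat x p1 p2 : endv x (p1 ++ p2) = endv (endv x p1) p2.
Proof. by rewrite /endv map_cat last_cat. Qed.

Lemma endv_cons x e p : endv x (e :: p) = endv (dst e) p.
Proof. by []. Qed.

Lemma path_walk e p :
  path (fun e1 e2 => dst e1 == src e2) e p = walk (dst e) p.
Proof. by elim: p e => [|e' p IH] e //=; rewrite IH eq_sym. Qed.

Lemma cpathE u v p :
  is_cpath src dst u v p =
  [&& ~~ nilp p, walk u p, endv u p == v & uniq (u :: map dst p)].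
Proof.
case: p => [|e p] //=; rewrite path_walk /endv /= last_map.
by case: eqP => [->|] //=; case: (dst (last e p) == v); case: walk.
Qed.

(* A nonempty walk is determined by its edges: its start is the source of
   its first edge. *)
Lemma walk_start_inj x y s :
  walk x s -> walk y s -> endv x s = endv y s -> x = y.
Proof. by case: s => [|e s] //= /andP[/eqP <- _] /andP[/eqP <- _]. Qed.

Lemma split_at u b p :
  b \in u :: map dst p -> exists P1 P2, p = P1 ++ P2 /\ endv u P1 = b.
Proof.
elim: p u => [|e p IH] u; first by rewrite mem_seq1 => /eqP ->; exists [::], [::].
rewrite inE; case: (b =P u) => [-> _|_ /= /IH[P1 [P2 [-> H2]]]].
  by exists [::], (e :: p).
by exists (e :: P1), P2.
Qed.

(* A path from u to v is never a proper suffix of another one: the longer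
   path would revisit u. *)
Lemma no_proper_suffix_path u v s q eb :
  is_cpath src dst u v s -> ~~ is_cpath src dst u v (q ++ eb :: s).
Proof.
rewrite !cpathE => /and4P[hs hws _ _]; apply/negP => /and4P[_ hwq _ hu].
case: s hs hws hwq hu => [|e0 s] // _ /= /andP[/eqP h0 _].
rewrite walk_cat => /andP[_] /= /and3P[_ /eqP h1 _].
rewrite map_cat /= => /andP[/negP []].
by rewrite mem_cat inE -h1 h0 eqxx orbT.
Qed.

End Walks.

Section IncomingColour.
Variables (V E M : eqType) (dst : E -> V) (col : E -> M).

(* Colour of the first edge of p entering x, if any; along a path this is
   the colour of the unique such edge. *)
Definition incol (p : seq E) (x : V) : option M :=
  ohead [seq col e | e <- p & dst e == x].

Lemma incol_cons e p x :
  incol (e :: p) x = if dst e == x then Some (col e) else incol p x.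
Proof. by rewrite /incol /=; case: (dst e == x). Qed.

Lemma incol_mem p e :
  uniq (map dst p) -> e \in p -> incol p (dst e) = Some (col e).
Proof.
elim: p => [|e' p IH] //= /andP[nin up]; rewrite inE incol_cons.
case/orP => [/eqP ->|ep]; first by rewrite eqxx.
case: eqP => [de|_]; last exact: IH.
by case/negP: nin; rewrite de map_f.
Qed.

Lemma incol_some p x : incol p x != None -> x \in map dst p.
Proof.
elim: p => [|e p IH] //=; rewrite incol_cons inE.
by case: (dst e =P x) => [-> _|_ /IH ->]; rewrite ?eqxx ?orbT.
Qed.

Lemma incol_endpoint (src : E -> V) u v p :
  is_cpath src dst u v p -> exists c, incol p v = Some c.
Proof.
rewrite cpathE => /and4P[hne _ /eqP hend /andP[_ hup]].
have : v \in map dst p by case: p hne hend {hup} => [|e p] // _ <-; rewrite /endv /= mem_last.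
by case/mapP => e he ->; exists (col e); apply: incol_mem.
Qed.

End IncomingColour.

Section MinimalPaths.
Variables (R : realFieldType) (V E : eqType) (M : finType).
Variables (src dst : E -> V) (col : E -> M) (w : E -> R).
Hypothesis hloop : forall e, src e != dst e.
Hypothesis hw : forall e, 0 < w e.
Hypothesis hsimple : forall e1 e2,
  src e1 = src e2 -> dst e1 = dst e2 -> col e1 = col e2 -> e1 = e2.
Variables u v : V.

Let cpath := is_cpath src dst u v.
Let minimal := is_minimal_path src dst col w u v.

Lemma cweight_cat c p q :
  cweight col w c (p ++ q) = cweight col w c p + cweight col w c q.
Proof. by rewrite /cweight big_cat. Qed.

Lemma cweight_cons c e p :
  cweight col w c (e :: p) = (if col e == c then w e else 0) + cweight col w c p.
Proof. by rewrite /cweight big_cons; case: (col e == c); rewrite ?add0r. Qed.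

Lemma cweight_ge0 c p : 0 <= cweight col w c p.
Proof. by apply: sumr_ge0 => e _; exact: ltW. Qed.

(* If a minimal path P1 P2 ea s admits the shortcut P1 eb s, where P2 is a
   nonempty detour and eb has the colour of ea, then eb is strictly heavier
   than ea: otherwise the shortcut would dominate the path. *)
Lemma shortcut_heavier P1 P2 ea eb s :
  minimal (P1 ++ P2 ++ ea :: s) -> cpath (P1 ++ eb :: s) ->
  ~~ nilp P2 -> col ea = col eb -> w ea < w eb.
Proof.
move=> [_ hmin] hr hP2 hc; rewrite ltNge; apply/negP => hle; apply: hmin.
exists (P1 ++ eb :: s); split => //; split.
  move=> c; rewrite !cweight_cat !cweight_cons hc.
  by have := cweight_ge0 c P2; case: (col eb == c) => /=; lra.
case: P2 hP2 => [|e0 P2] // _; exists (col e0).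
rewrite !cweight_cat !cweight_cons eqxx hc.
by have := cweight_ge0 (col e0) P2; have := hw e0; case: (col eb == col e0) => /=; lra.
Qed.

Definition same_incol (p q : seq E) : Prop :=
  forall x, x != u -> incol dst col p x = incol dst col q x.

(* The source of eb is visited by p' (or is u): it is visited by q', and
   the agreeing signatures transfer this to p' ea s, where it can be
   neither dst ea (no loops) nor a vertex of s (uniqueness in q). *)
Lemma source_visited p' q' ea eb s :
  cpath (p' ++ ea :: s) -> cpath (q' ++ eb :: s) ->
  same_incol (p' ++ ea :: s) (q' ++ eb :: s) -> dst ea = dst eb ->
  src eb \in u :: map dst p'.
Proof.
rewrite /cpath !cpathE => /and4P[_ _ _ /andP[_ hup]] /and4P[_ hwq _ huq] hinc hd.
move: hwq; rewrite walk_cat => /andP[_ /= /andP[/eqP hsb _]].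
have : src eb \in u :: map dst q' by rewrite hsb /endv mem_last.
rewrite !inE => /orP[-> //|hbq]; apply/orP; right.
move: huq => /= /andP[hu huq]; have hbu : src eb != u.
  by apply: contraNneq hu => <-; rewrite map_cat mem_cat hbq.
have : incol dst col (q' ++ eb :: s) (src eb) != None.
  by case/mapP: hbq => e he ->; rewrite (incol_mem col huq) // mem_cat he.
rewrite -hinc // => /incol_some; rewrite map_cat mem_cat inE.
case/orP => [//|/orP[/eqP hh|hh]]; first by move: (hloop eb); rewrite hh hd eqxx.
move: huq; rewrite map_cat cat_uniq => /and3P[_ /hasPn /(_ (src eb)) hn _].
by move: hn; rewrite /= inE hh orbT hbq => /(_ isT).
Qed.

Lemma shortcut_exists p' q' ea eb s :
  cpath (p' ++ ea :: s) -> cpath (q' ++ eb :: s) ->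
  same_incol (p' ++ ea :: s) (q' ++ eb :: s) ->
  dst ea = dst eb -> src ea != src eb ->
  exists P1 P2, p' = P1 ++ P2 /\ ~~ nilp P2 /\ cpath (P1 ++ eb :: s).
Proof.
move=> hp hq hinc hd hne.
have [P1 [P2 [hp' hend]]] := split_at (source_visited hp hq hinc hd).
move: hp hq; rewrite /cpath !cpathE => /and4P[_ hwp hep hup] /and4P[_ hwq _ _].
move: hwp; rewrite walk_cat => /andP[hwp' /= /andP[/eqP hsa _]].
move: hwq; rewrite walk_cat => /andP[_ /= /andP[/eqP hsb hws]].
exists P1, P2; split=> //; split.
  by case: P2 hp' => [|e P2] // hp'; move: hne; rewrite hsa hp' cats0 hend eqxx.
rewrite cpathE; apply/and4P; split.
- by case: P1 {hp' hend}.
- rewrite walk_cat /= hend eqxx /= hws andbT.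
  by move: hwp'; rewrite hp' walk_cat => /andP[].
- by move: hep; rewrite !endv_cat !endv_cons hd.
- apply: subseq_uniq hup; rewrite hp' -catA !map_cat /= hd.
  have := cat_subseq (subseq_refl (u :: map dst P1))
    (suffix_subseq (map dst P2) (dst eb :: map dst s)).
  by rewrite !cat_cons.
Qed.

Lemma last_edges_agree p' q' ea eb s :
  cpath (p' ++ ea :: s) -> cpath (q' ++ eb :: s) ->
  same_incol (p' ++ ea :: s) (q' ++ eb :: s) ->
  dst ea = dst eb /\ col ea = col eb.
Proof.
move=> hp hq hinc.
move: (hp) (hq); rewrite /cpath !cpathE => /and4P[_ hwp hep hup] /and4P[_ hwq heq huq].
move: hwp hwq; rewrite !walk_cat => /andP[_ /andP[_ hws]] /andP[_ /andP[_ hws']].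
have hd : dst ea = dst eb.
  apply: walk_start_inj hws hws' _.
  by move: hep heq; rewrite !endv_cat !endv_cons => /eqP -> /eqP ->.
split=> //; move: hup huq => /= /andP[hu hup] /andP[_ huq].
have hdu : dst ea != u.
  by apply: contraNneq hu => <-; rewrite map_f // mem_cat mem_head orbT.
move: (hinc _ hdu); rewrite (incol_mem col hup) ?mem_cat ?mem_head ?orbT //.
by rewrite hd (incol_mem col huq) ?mem_cat ?mem_head ?orbT // => -[].
Qed.

(* Minimal paths with a common suffix and agreeing signatures have the same
   last edge before that suffix: distinct last edges would give shortcuts of
   both paths, each forcing its replaced edge to be strictly lighter. *)
Lemma same_last_edge p' q' ea eb s :
  minimal (p' ++ ea :: s) -> minimal (q' ++ eb :: s) ->
  same_incol (p' ++ ea :: s) (q' ++ eb :: s) -> ea = eb.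
Proof.
move=> hpm hqm hinc; have [hp _] := hpm; have [hq _] := hqm.
have [hd hc] := last_edges_agree hp hq hinc.
have [//|hne] := eqVneq ea eb.
have hsne : src ea != src eb.
  by apply: contra hne => /eqP hs; apply/eqP; apply: hsimple.
have [P1 [P2 [hp' [hP2 hr]]]] := shortcut_exists hp hq hinc hd hsne.
have hinc' : same_incol (q' ++ eb :: s) (p' ++ ea :: s).
  by move=> x /hinc ->.
have [Q1 [Q2 [hq' [hQ2 hr']]]] :=
  shortcut_exists hq hp hinc' (esym hd) (contra_neq esym hsne).
rewrite hp' -catA in hpm; rewrite hq' -catA in hqm.
have := lt_trans (shortcut_heavier hpm hr hP2 hc) (shortcut_heavier hqm hr' hQ2 (esym hc)).
by rewrite ltxx.
Qed.

(* Main injectivity statement, generalised to a common suffix s for the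
   induction on the total length of the differing prefixes. *)
Lemma minimal_prefix_inj N p q s :
  (size p + size q <= N)%N -> minimal (p ++ s) -> minimal (q ++ s) ->
  same_incol (p ++ s) (q ++ s) -> p = q.
Proof.
elim: N p q s => [|N IH] p q s; first by case: p; case: q.
case/lastP: p => [|p' ea]; case/lastP: q => [|q' eb] //; rewrite ?cat_rcons.
- by move=> _ [hp _] [hq _]; case/negP: (no_proper_suffix_path q' eb hp).
- by move=> _ [hp _] [hq _]; case/negP: (no_proper_suffix_path p' ea hq).
rewrite !size_rcons addSn addnS ltnS => hN hpm hqm hinc.
have eab := same_last_edge hpm hqm hinc; subst eb.
by rewrite (IH p' q' (ea :: s)) // ltnW.
Qed.

Lemma minimal_path_incol_inj p q :
  minimal p -> minimal q -> same_incol p q -> p = q.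
Proof.
move=> hp hq hinc.
by apply: (@minimal_prefix_inj _ p q [::]); rewrite ?cats0.
Qed.

End MinimalPaths.

Lemma card_other_two (T : finType) (a b : T) :
  a != b -> #|{: {x : T | (x != a) && (x != b)}}| = (#|T| - 2)%N.
Proof.
move=> hab; have := cardsC [set a; b]; rewrite cards2 hab => hC.
rewrite card_sig -hC addKn; apply: eq_card => x.
by rewrite !inE negb_or.
Qed.

Theorem theorem3 (R : realFieldType) (V E M : finType)
    (src dst : E -> V) (col : E -> M) (w : E -> R)
    (n k : nat)
    (hn : #|V| = n) (hn2 : (2 <= n)%N) (hk : #|M| = k)
    (hloop : forall e : E, src e != dst e)
    (hw : forall e : E, 0 < w e)
    (hsurj : forall c : M, exists e : E, col e = c)
    (hsimple : forall e1 e2 : E,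
        src e1 = src e2 -> dst e1 = dst e2 -> col e1 = col e2 -> e1 = e2)
    (u v : V) (huv : u != v)
    (ps : seq (seq E))
    (hps_uniq : uniq ps)
    (hps_min : forall p, p \in ps -> is_minimal_path src dst col w u v p) :
  (size ps <= k * (k + 1) ^ (n - 2))%N.
Proof.
case: ps hps_uniq hps_min => [|p0 ps0] // hps_uniq hps_min.
(* A default colour, needed to read the (always present) colour at v. *)
have m0 : M.
  by case: (hps_min p0 (mem_head _ _)); case: (p0) => [|e _] // _ _; exact: col e.
set ps := p0 :: ps0 in hps_uniq hps_min *.
(* The signature: the colour entering v, and the incoming colours (or
   None) at the n - 2 remaining vertices. *)
pose D := {x : V | (x != u) && (x != v)}.
pose key p := (odflt m0 (incol dst col p v), [ffun x : D => incol dst col p (val x)]).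
have key_inj : {in ps &, injective key}.
  move=> p q /hps_min hp /hps_min hq [hv /ffunP hD].
  apply: (minimal_path_incol_inj hloop hw hsimple hp hq) => x hxu.
  have [->|hxv] := eqVneq x v.
    have [c1 e1] := incol_endpoint col hp.1; have [c2 e2] := incol_endpoint col hq.1.
    by move: hv; rewrite e1 e2 /= => ->.
  by have := hD (exist _ x (introT andP (conj hxu hxv))); rewrite !ffunE.
have key_uniq : uniq (map key ps) by rewrite (map_inj_in_uniq key_inj).
have := max_card (mem (map key ps)).
rewrite (card_uniqP key_uniq) size_map.
rewrite card_prod card_ffun card_option (card_other_two huv) hk hn addn1; exact: id.
Qed.
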